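(* Let $F$ be a field with $\operatorname{char}(F)\neq 2$ and let $U$ be a noncommutative unital prime associative $F$-algebra. Consider the algebra $A=U\times U$ as a superalgebra with respect to the grading induced by the exchange automorphism $(u,v)\mapsto(v,u)$, i.e. $A_0=\{(u,u):u\in U\}$ and $A_1=\{(u,-u):u\in U\}$. Then every Lie superautomorphism $\varphi$ of $A$ is either a superautomorphism or the negative of a superantiautomorphism.
   Context: A superalgebra is an algebra $A=A_0\oplus A_1$ with $A_iA_j\subseteq A_{i+j}$ ($i,j\in\mathbb Z_2$); homogeneous elements of $A_i$ have degree $|x|=i$; graded linear maps preserve degrees. The supercommutator is $[x,y]_s=xy-(-1)^{|x||y|}yx$ for homogeneous $x,y$, extended bilinearly. A Lie superautomorphism of $A$ is a bijective graded linear map $\varphi:A\to A$ with $\varphi([x,y]_s)=[\varphi(x),\varphi(y)]_s$. A superautomorphism is a bijective graded algebra homomorphism; a superantiautomorphism is a bijective graded linear map $\psi$ with $\psi(xy)=(-1)^{|x||y|}\psi(y)\psi(x)$ for homogeneous $x,y$. *)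

From mathcomp Require Import all_boot all_algebra.
Set Implicit Arguments. Unset Strict Implicit. Unset Printing Implicit Defensive.
Import GRing.Theory.
Local Open Scope ring_scope.

Section Super.
Variables (F : fieldType) (U : algType F).

Definition superA := (U * U)%type.

(* Grading induced by the exchange automorphism (u,v) |-> (v,u):
   A_0 = {(u,u)}, A_1 = {(u,-u)}.  [homog i x] : x is homogeneous of degree i
   (false = 0, true = 1). *)
Definition homog (i : bool) (x : superA) : Prop :=
  if i then x.2 = - x.1 else x.2 = x.1.

Definition ssign (i j : bool) : F := if i && j then -1 else 1.

Definition scomm (i j : bool) (x y : superA) : superA :=
  x * y - ssign i j *: (y * x).

Definition graded_linear (f : superA -> superA) : Prop :=
  (forall (a : F) (x y : superA), f (a *: x + y) = a *: f x + f y) /\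
  (forall (i : bool) (x : superA), homog i x -> homog i (f x)).

Definition lie_superautomorphism (f : superA -> superA) : Prop :=
  [/\ bijective f, graded_linear f &
      forall (i j : bool) (x y : superA), homog i x -> homog j y ->
        f (scomm i j x y) = scomm i j (f x) (f y)].

Definition superautomorphism (f : superA -> superA) : Prop :=
  [/\ bijective f, graded_linear f & forall x y : superA, f (x * y) = f x * f y].

Definition superantiautomorphism (f : superA -> superA) : Prop :=
  [/\ bijective f, graded_linear f &
      forall (i j : bool) (x y : superA), homog i x -> homog j y ->
        f (x * y) = ssign i j *: (f y * f x)].

End Super.

Definition prime_ring (R : pzRingType) : Prop :=
  forall a b : R, (forall x : R, a * x * b = 0) -> a = 0 \/ b = 0.

Definition noncommutative (R : pzRingType) : Prop :=
  exists x y : R, x * y != y * x.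

From mathcomp Require Import all_boot all_algebra.
Set Implicit Arguments. Unset Strict Implicit. Unset Printing Implicit Defensive.
Import GRing.Theory.
Local Open Scope ring_scope.

(* Write the homogeneous elements as (a, a) and (a, -a).  A graded map phi
   is then described by two additive maps f, g on U with
   phi (a, a) = (f a, f a) and phi (a, -a) = (g a, - g a), and the Lie
   condition on the three kinds of homogeneous pairs reads
   f [a, b] = [f a, f b], g [a, b] = [f a, g b], f (a o b) = g a o g b,
   where a o b = a b + b a.  As f is onto, the second identity with b = 1
   makes g 1 central and the third one gives f = g 1 * g; hence g = d f for a
   central invertible d, and f (a o b) = d^2 (f a o f b).  Applying f to
   (a o b) o c - a o (b o c) = [b, [a, c]] shows that d^4 - 1 annihilates all
   double commutators, which in a noncommutative prime ring forces d^4 = 1,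
   i.e. d^2 = 1 or d^2 = -1.  Since 2 f (a b) = f (a o b) + f [a, b], f is then
   multiplicative or antimultiplicative, and so is phi on homogeneous pairs. *)

Definition lie (R : pzRingType) (x y : R) : R := x * y - y * x.
Definition jordan (R : pzRingType) (x y : R) : R := x * y + y * x.
Definition central (R : pzRingType) (c : R) : Prop := forall x, GRing.comm c x.

Lemma jordan_associator (R : pzRingType) (x y z : R) :
  jordan (jordan x y) z - jordan x (jordan y z) = lie y (lie x z).
Proof.
rewrite /jordan /lie !mulrDl !mulrDr mulrN mulNr !mulrA opprB !opprD !addrA.
by rewrite [LHS](AC (8) ((1*5)*(4*8)*(((2*7)*3)*6))) /= !subrr !add0r.
Qed.

Lemma jordan_add_lie (R : pzRingType) (x y : R) :
  jordan x y + lie x y = x * y + x * y.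
Proof. by rewrite /jordan /lie addrACA subrr addr0. Qed.

Lemma oppr_jordan_add_lie (R : pzRingType) (x y : R) :
  - jordan x y + lie x y = - (y * x) + - (y * x).
Proof. by rewrite /jordan /lie opprD addrACA addNr add0r. Qed.

Lemma double_inj (F : fieldType) (V : lmodType F) :
  (2%:R : F) != 0 -> injective (fun v : V => v + v).
Proof.
move=> two_neq0 u v /= /(congr1 ( *:%R (2%:R^-1 : F))).
by rewrite -!mulr2n -!scaler_nat !scalerA mulVf // !scale1r.
Qed.

Section CentralElements.
Variable R : pzRingType.
Implicit Types c d x y : R.

Lemma central_mulrCA c x y : central c -> x * (c * y) = c * (x * y).
Proof. by move=> cC; rewrite mulrA -cC mulrA. Qed.

Lemma centralX c n : central c -> central (c ^+ n).
Proof. by move=> cC x; apply/commr_sym/commrX/commr_sym. Qed.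

Lemma centralM c d : central c -> central d -> central (c * d).
Proof. by move=> cC dC x; apply/commr_sym/commrM; apply/commr_sym. Qed.

Lemma centralD1 c : central c -> central (c + 1).
Proof. by move=> cC x; apply/commr_sym/commrD; [apply/commr_sym | apply/commr1]. Qed.

Lemma centralB1 c : central c -> central (c - 1).
Proof. by move=> cC x; apply/commr_sym/commrB; [apply/commr_sym | apply/commr1]. Qed.

Lemma jordan_centralMl c x y : central c -> jordan (c * x) y = c * jordan x y.
Proof. by move=> cC; rewrite /jordan mulrDr -mulrA (central_mulrCA y x cC). Qed.

Lemma jordan_centralMr c x y : central c -> jordan x (c * y) = c * jordan x y.
Proof. by move=> cC; rewrite /jordan mulrDr (central_mulrCA x y cC) -mulrA. Qed.

Lemma exprb_mul c (i j : bool) : c ^+ i * c ^+ j = (c * c) ^+ (i && j) * c ^+ (i (+) j).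
Proof. by case: i; case: j; rewrite /= ?expr0 ?expr1 ?mul1r ?mulr1. Qed.

Lemma mul_exprb_central c (i j : bool) x y : central c ->
  c ^+ i * x * (c ^+ j * y) = (c * c) ^+ (i && j) * c ^+ (i (+) j) * (x * y).
Proof. by move=> cC; rewrite -mulrA (central_mulrCA x y (centralX j cC)) mulrA exprb_mul. Qed.

End CentralElements.

Section PrimeRing.
Variable R : pzRingType.
Hypothesis hprime : prime_ring R.

Lemma central_mul_eq0 (c w : R) : central c -> c * w = 0 -> c = 0 \/ w = 0.
Proof. by move=> cC cw0; apply: hprime => x; rewrite cC -mulrA cw0 mulr0. Qed.

Lemma central_sqr_eq1 (e : R) : central e -> e * e = 1 -> e = 1 \/ e = -1.
Proof.
move=> eC ee1; have: (e + 1) * (e - 1) = 0.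
  by rewrite mulrDl mul1r mulrBr mulr1 addrA subrK ee1 subrr.
case/(central_mul_eq0 (centralD1 eC)) => [/eqP|/subr0_eq]; last by left.
by rewrite addr_eq0 => /eqP; right.
Qed.

Lemma commutative_of_central_lie :
  (forall x y : R, central (lie x y)) -> forall x y : R, x * y = y * x.
Proof.
move=> lieC x y; apply/subr0_eq; set k := lie x y.
(* [x * k = lie x (x * y)] is central as well, and this forces [k * k = 0]. *)
have xkC : central (x * k).
  by rewrite (_ : x * k = lie x (x * y)) // /k /lie mulrBr !mulrA.
have kC := lieC x y.
have : k * k = 0.
  rewrite {2}/k /lie mulrBr !mulrA [k * x]kC xkC [k * y]kC -(mulrA y k x).
  by rewrite [k * x]kC subrr.
by case/(central_mul_eq0 kC).
Qed.

Lemma central_annihilator_double_lie_eq0 (del : R) : noncommutative R -> central del ->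
  (forall x y z : R, del * lie y (lie x z) = 0) -> del = 0.
Proof.
move=> [x [y /eqP xy_neq]] delC hdel; have [//|del_neq0] := eqVneq del 0.
case: xy_neq; apply: commutative_of_central_lie => u v z; apply/esym/subr0_eq.
by case: (central_mul_eq0 delC (hdel u z v)) => // del0; rewrite del0 eqxx in del_neq0.
Qed.

End PrimeRing.

Section LieJordanPair.
Variables (F : fieldType) (U : algType F).
Hypotheses (hchar : (2%:R : F) != 0) (hprime : prime_ring U) (hnc : noncommutative U).
Variables f g : U -> U.
Hypotheses (fD : {morph f : a b / a + b}) (gD : {morph g : a b / a + b}).
Hypothesis f_surj : forall y, exists a, f a = y.
Hypothesis f_lie : forall a b, f (lie a b) = lie (f a) (f b).
Hypothesis g_lie : forall a b, g (lie a b) = lie (f a) (g b).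
Hypothesis f_jordan : forall a b, f (jordan a b) = jordan (g a) (g b).

Lemma lie_jordan_pair_scale : exists2 d, central d & forall a, g a = d * f a.
Proof.
have g0 : g 0 = 0 by apply: (addrI (g 0)); rewrite -gD !addr0.
pose c := g 1.
have cC : central c.
  move=> y; have [a <-] := f_surj y; apply/esym/subr0_eq.
  by have := g_lie a 1; rewrite /lie mulr1 mul1r subrr g0.
have f_cg a : f a = c * g a.
  apply: (double_inj hchar); have := f_jordan a 1.
  by rewrite /jordan mulr1 mul1r fD -/c -(cC (g a)) => ->.
have [u fu1] := f_surj 1; exists (g u) => [y|a].
  have cd : c * g u = 1 by rewrite -f_cg.
  rewrite /GRing.comm -[g u * y]mulr1 -cd mulrA -(mulrA _ y) -cC mulrA.
  by rewrite -(cC (g u)) cd mul1r.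
by rewrite f_cg mulrA -cC -f_cg fu1 mul1r.
Qed.

Variable d : U.
Hypotheses (dC : central d) (gE : forall a, g a = d * f a).

Let e := d * d.
Let eC : central e := centralM dC dC.

Lemma f_jordan_scaled a b : f (jordan a b) = e * jordan (f a) (f b).
Proof. by rewrite f_jordan !gE jordan_centralMl // jordan_centralMr // mulrA. Qed.

Lemma scale_sqr_sqr_eq1 : e * e = 1.
Proof.
apply/subr0_eq/(central_annihilator_double_lie_eq0 hprime hnc).
  exact/centralB1/centralM.
move=> x y z; have [a <-] := f_surj x; have [b <-] := f_surj y; have [c <-] := f_surj z.
have f0 : f 0 = 0 by apply: (addrI (f 0)); rewrite -fD !addr0.
have fN p : f (- p) = - f p by apply: (addrI (f p)); rewrite -fD !subrr f0.
have f_assoc : f (lie b (lie a c)) = e * e * lie (f b) (lie (f a) (f c)).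
  rewrite -jordan_associator fD fN !f_jordan_scaled.
  rewrite jordan_centralMl // jordan_centralMr // !mulrA -mulrBr.
  by rewrite jordan_associator.
by rewrite mulrBl mul1r -f_assoc !f_lie subrr.
Qed.

Lemma f_mul_or_antimul :
  (e = 1 /\ forall a b, f (a * b) = f a * f b) \/
  (e = -1 /\ forall a b, f (a * b) = - (f b * f a)).
Proof.
have f_double a b :
    f (a * b) + f (a * b) = e * jordan (f a) (f b) + lie (f a) (f b).
  by rewrite -fD -jordan_add_lie fD f_jordan_scaled f_lie.
have [e1|e1] := central_sqr_eq1 hprime eC scale_sqr_sqr_eq1; [left|right].
  split=> // a b; apply: (double_inj hchar).
  by rewrite /= f_double e1 mul1r jordan_add_lie.
split=> // a b; apply: (double_inj hchar).
by rewrite /= f_double e1 mulN1r oppr_jordan_add_lie.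
Qed.

End LieJordanPair.

Section SuperA.
Variables (F : fieldType) (U : algType F).
Implicit Types (i j : bool) (a b : U) (x y : superA U).

Definition hom i a : superA U := (a, if i then - a else a).

Lemma homP i x : homog i x -> x = hom i x.1.
Proof. by case: x i => p q [] /= ->. Qed.

Lemma homog_hom i a : homog i (hom i a).
Proof. by case: i. Qed.

Lemma hom_inj i : injective (hom i).
Proof. by move=> a b /(congr1 fst). Qed.

Lemma hom0 i : hom i 0 = 0.
Proof. by case: i; rewrite /hom ?oppr0. Qed.

Lemma homD i a b : hom i (a + b) = hom i a + hom i b.
Proof. by case: i; rewrite /hom //; congr (_, _); rewrite opprD. Qed.

Lemma homN i a : hom i (- a) = - hom i a.
Proof. by case: i. Qed.

Lemma homZ i k a : hom i (k *: a) = k *: hom i a.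
Proof. by case: i; rewrite /hom //; congr (_, _); rewrite /= scalerN. Qed.

Lemma homogN i x : homog i x -> homog i (- x).
Proof. by move/homP->; rewrite -homN; apply: homog_hom. Qed.

Lemma hom_mul i j a b : hom i a * hom j b = hom (i (+) j) (a * b).
Proof.
by case: i; case: j; rewrite /hom //; congr (_, _); rewrite /= ?mulrNN ?mulrN ?mulNr.
Qed.

Lemma scomm_hom i j a b :
  scomm i j (hom i a) (hom j b) = hom (i (+) j) (a * b - ssign F i j *: (b * a)).
Proof.
case: i; case: j; rewrite /scomm /hom //; congr (_, _).
all: by rewrite /= ?mulrNN ?mulrN ?mulNr ?scalerN ?opprD ?opprK.
Qed.

Lemma superA_decomp : (2%:R : F) != 0 -> forall x, exists a b, x = hom false a + hom true b.
Proof.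
move=> two_neq0 [p q]; pose h := (2%:R : F)^-1.
have hK (u : U) : h *: (u + u) = u by rewrite -mulr2n -scaler_nat scalerA mulVf ?scale1r.
exists (h *: (p + q)), (h *: (p - q)); rewrite /hom; congr (_, _) => /=.
  by rewrite -scalerDr addrACA subrr addr0 hK.
by rewrite -scalerBr opprB [p + q]addrC addrACA subrr addr0 hK.
Qed.

Lemma hom_even_odd_inj : (2%:R : F) != 0 -> forall a b a' b',
  hom false a + hom true b = hom false a' + hom true b' -> a = a' /\ b = b'.
Proof.
move=> two_neq0 a b a' b' E; have /= E1 := congr1 fst E; have /= E2 := congr1 snd E.
have sum_diff (x y : U) : x + y + (x - y) = x + x by rewrite addrACA subrr addr0.
have aa' : a = a'.
  by apply: (double_inj two_neq0); rewrite /= -(sum_diff a b) -(sum_diff a' b') E1 E2.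
by split=> //; apply: (addrI a); rewrite E1 aa'.
Qed.

Lemma scale_ssign i j (u : U) : ssign F i j *: u = (-1) ^+ (i && j) * u.
Proof. by case: i; case: j; rewrite /ssign /= ?scaleN1r ?scale1r ?expr1 ?mulN1r ?mul1r. Qed.

End SuperA.

Section GradedLinear.
Variables (F : fieldType) (U : algType F) (phi : superA U -> superA U).
Hypothesis phi_lin : graded_linear phi.

Definition component i a : U := (phi (hom i a)).1.

Lemma graded_linearD : {morph phi : x y / x + y}.
Proof. by move=> x y; rewrite -[x]scale1r phi_lin.1 !scale1r. Qed.

Lemma graded_linear_hom i a : phi (hom i a) = hom i (component i a).
Proof. exact: homP (phi_lin.2 _ _ (homog_hom i a)). Qed.

Lemma componentD i : {morph component i : a b / a + b}.
Proof. by move=> a b; rewrite /component homD graded_linearD. Qed.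

Lemma component_surj : (2%:R : F) != 0 -> bijective phi ->
  forall y, exists a, component false a = y.
Proof.
move=> two_neq0 [psi psiK phiK] y.
have [a [b psiE]] := superA_decomp two_neq0 (psi (hom false y)).
exists a; have := phiK (hom false y); rewrite psiE graded_linearD !graded_linear_hom.
have -> : hom false y = hom false y + hom true 0 by rewrite hom0 addr0.
by case/(hom_even_odd_inj two_neq0).
Qed.

Lemma component_scomm :
  (forall i j x y, homog i x -> homog j y ->
     phi (scomm i j x y) = scomm i j (phi x) (phi y)) ->
  forall i j a b, component (i (+) j) (a * b - ssign F i j *: (b * a)) =
    component i a * component j b - ssign F i j *: (component j b * component i a).
Proof.
move=> phi_lie i j a b; apply: (@hom_inj _ _ (i (+) j)).
have := phi_lie i j _ _ (homog_hom i a) (homog_hom j b).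
by rewrite scomm_hom !graded_linear_hom scomm_hom.
Qed.

Lemma superautomorphism_of_components : (2%:R : F) != 0 -> bijective phi ->
  (forall i j a b, component (i (+) j) (a * b) = component i a * component j b) ->
  superautomorphism phi.
Proof.
move=> two_neq0 phi_bij compM; split=> // x y.
have homM i j a b : phi (hom i a * hom j b) = phi (hom i a) * phi (hom j b).
  by rewrite hom_mul !graded_linear_hom compM hom_mul.
have [a [b ->]] := superA_decomp two_neq0 x; have [c [d ->]] := superA_decomp two_neq0 y.
by rewrite mulrDl !mulrDr !graded_linearD !homM mulrDl !mulrDr.
Qed.

Lemma opp_superantiautomorphism_of_components : bijective phi ->
  (forall i j a b,
     component (i (+) j) (a * b) = - (ssign F i j *: (component j b * component i a))) ->
  superantiautomorphism (fun x => - phi x).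
Proof.
move=> phi_bij compM; split.
- exact: bij_comp (inv_bij (@opprK _)) phi_bij.
- split=> [k x y | i x /(phi_lin.2 i)/homogN //].
  by rewrite phi_lin.1 opprD scalerN.
- move=> i j x y /homP -> /homP ->.
  by rewrite hom_mul !graded_linear_hom mulrNN hom_mul compM homN homZ opprK addbC.
Qed.

End GradedLinear.

Theorem theorem5p1 (F : fieldType) (U : algType F)
    (hchar : (2%:R : F) != 0)
    (hprime : prime_ring U) (hnc : noncommutative U)
    (phi : superA U -> superA U) :
  lie_superautomorphism phi ->
  superautomorphism phi \/ superantiautomorphism (fun x => - phi x).
Proof.
move=> [phi_bij phi_lin phi_lie].
pose f := component phi false; pose g := component phi true.
have comp_lie := component_scomm phi_lin phi_lie.
have f_lie a b : f (lie a b) = lie (f a) (f b).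
  by have := comp_lie false false a b; rewrite /ssign !scale1r.
have g_lie a b : g (lie a b) = lie (f a) (g b).
  by have := comp_lie false true a b; rewrite /ssign !scale1r.
have f_jordan a b : f (jordan a b) = jordan (g a) (g b).
  by have := comp_lie true true a b; rewrite /ssign !scaleN1r !opprK.
have fD : {morph f : a b / a + b} := componentD phi_lin false.
have gD : {morph g : a b / a + b} := componentD phi_lin true.
have f_surj : forall y, exists a, f a = y := component_surj phi_lin hchar phi_bij.
have [d dC gE] := lie_jordan_pair_scale hchar fD gD f_surj g_lie f_jordan.
have compE i a : component phi i a = d ^+ i * f a.
  by case: i; rewrite ?gE ?expr0 ?expr1 ?mul1r.
have [[d2 fM]|[d2 fA]] := f_mul_or_antimul hchar hprime hnc fD f_surj f_lie f_jordan dC gE.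
- left; apply: superautomorphism_of_components => // i j a b.
  by rewrite !compE mul_exprb_central // d2 expr1n mul1r fM.
- right; apply: opp_superantiautomorphism_of_components => // i j a b.
  rewrite !compE mul_exprb_central // d2 scale_ssign andbC -mulrA.
  by rewrite signrMK addbC fA mulrN.
Qed.
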